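(* Let $A=A_{i,r}$ be an object of a double complex in an abelian category. (1) If $(A_{i-1,r})_\square=0$ and ${}^\square A_{i,r+1}=0$, then the intramural maps ${}^\square A\to H^{\mathrm v}(A)$ and $H^{\mathrm h}(A)\to A_\square$ are isomorphisms. (2) If $(A_{i,r-1})_\square=0$ and ${}^\square A_{i+1,r}=0$, then the intramural maps ${}^\square A\to H^{\mathrm h}(A)$ and $H^{\mathrm v}(A)\to A_\square$ are isomorphisms.
   Context: Work in an abelian category $\mathcal{A}$. A double complex is a family of objects $A_{i,r}$ $(i,r\in\mathbb{Z})$ of $\mathcal{A}$, drawn in a grid with $i$ indexing rows (increasing downward) and $r$ indexing columns (increasing to the right), with horizontal maps $\delta_2:A_{i,r}\to A_{i,r+1}$ and vertical maps $\delta_1:A_{i,r}\to A_{i+1,r}$ satisfying $\delta_2\delta_2=0$, $\delta_1\delta_1=0$, $\delta_1\delta_2=\delta_2\delta_1$. A finite commutative diagram of this shape whose rows and columns are complexes is regarded as a double complex by completing it with zero objects. For an object $A=A_{i,r}$ write $d:A_{i,r-1}\to A$ and $e:A\to A_{i,r+1}$ for the horizontal maps into and out of $A$, $c:A_{i-1,r}\to A$ and $f:A\to A_{i+1,r}$ for the vertical maps into and out of $A$, $p:A_{i-1,r-1}\to A$ for the (common) composite of two arrows ending at $A$, and $q:A\to A_{i+1,r+1}$ for the composite of two arrows starting at $A$. Define: horizontal homology $H^{\mathrm h}(A)=\ker e/\operatorname{im} d$; vertical homology $H^{\mathrm v}(A)=\ker f/\operatorname{im} c$; the receptor ${}^\square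 A=(\ker e\cap\ker f)/\operatorname{im} p$; the donor $A_\square=\ker q/(\operatorname{im} c+\operatorname{im} d)$. The identity of $A$ induces the ''intramural'' maps ${}^\square A\to H^{\mathrm h}(A)\to A_\square$ and ${}^\square A\to H^{\mathrm v}(A)\to A_\square$. Each arrow $g:A\to B$ of the double complex (horizontal or vertical) induces the ''extramural'' map $A_\square\to{}^\square B$. *)

From Stdlib Require Import ZArith ClassicalEpsilon.
Set Implicit Arguments.
Unset Strict Implicit.

Record Category := Category_ {
  Ob :> Type;
  Hom : Ob -> Ob -> Type;
  idm : forall A, Hom A A;
  comp : forall A B C, Hom B C -> Hom A B -> Hom A C;
  comp_idl : forall A B (f : Hom A B), comp (idm B) f = f;
  comp_idr : forall A B (f : Hom A B), comp f (idm A) = f;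
  comp_assoc : forall A B C D (f : Hom C D) (g : Hom B C) (h : Hom A B),
      comp f (comp g h) = comp (comp f g) h }.
Arguments Hom {c} _ _.
Arguments idm {c} A.
Arguments comp {c A B C} _ _.
Notation "g ∘ f" := (comp g f) (at level 40, left associativity).

Section CatDefs.
Context {C : Category}.

Definition is_zero_obj (Z : C) : Prop :=
  (forall X : C, exists f : Hom Z X, forall g, g = f) /\
  (forall X : C, exists f : Hom X Z, forall g, g = f).

Definition zero_mor {X Y : C} (f : Hom X Y) : Prop :=
  exists (Z : C) (u : Hom X Z) (v : Hom Z Y), is_zero_obj Z /\ f = v ∘ u.

Definition is_product {P A B : C} (p1 : Hom P A) (p2 : Hom P B) : Prop :=
  forall (X : C) (f : Hom X A) (g : Hom X B),
    exists! u : Hom X P, p1 ∘ u = f /\ p2 ∘ u = g.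

Definition is_coproduct {S A B : C} (i1 : Hom A S) (i2 : Hom B S) : Prop :=
  forall (X : C) (f : Hom A X) (g : Hom B X),
    exists! u : Hom S X, u ∘ i1 = f /\ u ∘ i2 = g.

Definition is_kernel {A B K : C} (f : Hom A B) (k : Hom K A) : Prop :=
  zero_mor (f ∘ k) /\
  forall (X : C) (g : Hom X A), zero_mor (f ∘ g) -> exists! u : Hom X K, k ∘ u = g.

Definition is_cokernel {A B Q : C} (f : Hom A B) (c : Hom B Q) : Prop :=
  zero_mor (c ∘ f) /\
  forall (X : C) (g : Hom B X), zero_mor (g ∘ f) -> exists! u : Hom Q X, u ∘ c = g.

Definition mono {A B : C} (m : Hom A B) : Prop :=
  forall (X : C) (g h : Hom X A), m ∘ g = m ∘ h -> g = h.

Definition epi {A B : C} (m : Hom A B) : Prop :=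
  forall (X : C) (g h : Hom B X), g ∘ m = h ∘ m -> g = h.

Definition is_iso {A B : C} (f : Hom A B) : Prop :=
  exists g : Hom B A, g ∘ f = idm A /\ f ∘ g = idm B.

Record is_abelian : Prop := {
  ab_zero : exists Z : C, is_zero_obj Z;
  ab_prod : forall A B : C, exists (P : C) (p1 : Hom P A) (p2 : Hom P B), is_product p1 p2;
  ab_coprod : forall A B : C, exists (S : C) (i1 : Hom A S) (i2 : Hom B S), is_coproduct i1 i2;
  ab_ker : forall (A B : C) (f : Hom A B), exists (K : C) (k : Hom K A), is_kernel f k;
  ab_coker : forall (A B : C) (f : Hom A B), exists (Q : C) (c : Hom B Q), is_cokernel f c;
  ab_mono_normal : forall (A B : C) (m : Hom A B), mono m ->
      exists (X : C) (g : Hom B X), is_kernel g m;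
  ab_epi_normal : forall (A B : C) (m : Hom A B), epi m ->
      exists (X : C) (g : Hom X A), is_cokernel g m }.
End CatDefs.
Arguments is_abelian : clear implicits.

Record AbelianCategory := AbelianCategory_ {
  acat :> Category;
  acat_ax : is_abelian acat }.

Section Choices.
Context {C : AbelianCategory}.

Lemma hom_inh (X Y : C) : inhabited (Hom X Y).
Proof.
  destruct (ab_zero (acat_ax C)) as [Z [HZ1 HZ2]].
  destruct (HZ1 Y) as [v _]. destruct (HZ2 X) as [u _].
  exact (inhabits (v ∘ u)).
Qed.

Definition ker_pack {A B : C} (f : Hom A B) :=
  constructive_indefinite_description _ (ab_ker (acat_ax C) f).
Definition kerO {A B : C} (f : Hom A B) : C := proj1_sig (ker_pack f).
Definition kerM {A B : C} (f : Hom A B) : Hom (kerO f) A :=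
  proj1_sig (constructive_indefinite_description _ (proj2_sig (ker_pack f))).

Definition coker_pack {A B : C} (f : Hom A B) :=
  constructive_indefinite_description _ (ab_coker (acat_ax C) f).
Definition cokerO {A B : C} (f : Hom A B) : C := proj1_sig (coker_pack f).
Definition cokerM {A B : C} (f : Hom A B) : Hom B (cokerO f) :=
  proj1_sig (constructive_indefinite_description _ (proj2_sig (coker_pack f))).

Definition prod_pack (A B : C) :=
  constructive_indefinite_description _ (ab_prod (acat_ax C) A B).
Definition prodO (A B : C) : C := proj1_sig (prod_pack A B).
Definition prod_pack2 (A B : C) :=
  constructive_indefinite_description _ (proj2_sig (prod_pack A B)).
Definition pr1 (A B : C) : Hom (prodO A B) A := proj1_sig (prod_pack2 A B).
Definition pr2 (A B : C) : Hom (prodO A B) B :=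
  proj1_sig (constructive_indefinite_description _ (proj2_sig (prod_pack2 A B))).

Definition coprod_pack (A B : C) :=
  constructive_indefinite_description _ (ab_coprod (acat_ax C) A B).
Definition coprodO (A B : C) : C := proj1_sig (coprod_pack A B).
Definition coprod_pack2 (A B : C) :=
  constructive_indefinite_description _ (proj2_sig (coprod_pack A B)).
Definition in1 (A B : C) : Hom A (coprodO A B) := proj1_sig (coprod_pack2 A B).
Definition in2 (A B : C) : Hom B (coprodO A B) :=
  proj1_sig (constructive_indefinite_description _ (proj2_sig (coprod_pack2 A B))).

(* induced maps (determined uniquely whenever they exist) *)
Definition lift {K X W : C} (k : Hom K X) (g : Hom W X) : Hom W K :=
  epsilon (hom_inh W K) (fun u => k ∘ u = g).
Definition colift {X Q W : C} (c : Hom X Q) (g : Hom X W) : Hom Q W :=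
  epsilon (hom_inh Q W) (fun u => u ∘ c = g).
Definition pairing {X A B : C} (f : Hom X A) (g : Hom X B) : Hom X (prodO A B) :=
  epsilon (hom_inh _ _) (fun u => pr1 A B ∘ u = f /\ pr2 A B ∘ u = g).
Definition copairing {A B X : C} (f : Hom A X) (g : Hom B X) : Hom (coprodO A B) X :=
  epsilon (hom_inh _ _) (fun u => u ∘ in1 A B = f /\ u ∘ in2 A B = g).

(* Local data around an object X:
     d : L -> X (horizontal in), c : U -> X (vertical in),
     e : X -> R (horizontal out), f : X -> D (vertical out),
     p : UL -> X (composite in), q : X -> DR (composite out). *)
Section Local.
Variables (X L U R D UL DR : C).

(* receptor  (ker e ∩ ker f) / im p *)
Definition rec_K (e : Hom X R) (f : Hom X D) := kerM (pairing e f).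
Definition rec_p (e : Hom X R) (f : Hom X D) (p : Hom UL X) := lift (rec_K e f) p.
Definition receptor (e : Hom X R) (f : Hom X D) (p : Hom UL X) : C :=
  cokerO (rec_p e f p).
Definition rec_pi (e : Hom X R) (f : Hom X D) (p : Hom UL X) :
  Hom (kerO (pairing e f)) (receptor e f p) := cokerM (rec_p e f p).

Definition hom_in (d : Hom L X) (e : Hom X R) := lift (kerM e) d.
Definition homology (d : Hom L X) (e : Hom X R) : C := cokerO (hom_in d e).
Definition hom_pi (d : Hom L X) (e : Hom X R) : Hom (kerO e) (homology d e) :=
  cokerM (hom_in d e).

(* donor  ker q / (im c + im d) = ker (coker [c,d] -> DR) *)
Definition don_Qpi (c : Hom U X) (d : Hom L X) := cokerM (copairing c d).
Definition don_qbar (c : Hom U X) (d : Hom L X) (q : Hom X DR) :=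
  colift (don_Qpi c d) q.
Definition donor (c : Hom U X) (d : Hom L X) (q : Hom X DR) : C :=
  kerO (don_qbar c d q).
Definition don_k (c : Hom U X) (d : Hom L X) (q : Hom X DR) :
  Hom (donor c d q) (cokerO (copairing c d)) := kerM (don_qbar c d q).

End Local.
End Choices.

(* Intramural maps, specialized (to avoid type clashes between R and D we
   define them directly). *)
Section Intramural.
Context {C : AbelianCategory}.
Variables (X L U R D UL DR : C)
  (d : Hom L X) (c : Hom U X) (e : Hom X R) (f : Hom X D)
  (p : Hom UL X) (q : Hom X DR).

Definition rec_to_Hh : Hom (receptor e f p) (homology d e) :=
  colift (rec_pi e f p) (hom_pi d e ∘ lift (kerM e) (rec_K e f)).
Definition rec_to_Hv : Hom (receptor e f p) (homology c f) :=
  colift (rec_pi e f p) (hom_pi c f ∘ lift (kerM f) (rec_K e f)).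
Definition Hh_to_don : Hom (homology d e) (donor c d q) :=
  colift (hom_pi d e) (lift (don_k c d q) (don_Qpi c d ∘ kerM e)).
Definition Hv_to_don : Hom (homology c f) (donor c d q) :=
  colift (hom_pi c f) (lift (don_k c d q) (don_Qpi c d ∘ kerM f)).
End Intramural.

(* Double complexes indexed by Z x Z: i = row (down), r = column (right). *)
Record DoubleComplex (C : AbelianCategory) := DoubleComplex_ {
  dc :> Z -> Z -> C;
  d2 : forall i r, Hom (dc i r) (dc i (Z.succ r));
  d1 : forall i r, Hom (dc i r) (dc (Z.succ i) r);
  d2d2 : forall i r, zero_mor (d2 i (Z.succ r) ∘ d2 i r);
  d1d1 : forall i r, zero_mor (d1 (Z.succ i) r ∘ d1 i r);
  d1d2 : forall i r, d1 i (Z.succ r) ∘ d2 i r = d2 (Z.succ i) r ∘ d1 i r }.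

Section DCLocal.
Context {C : AbelianCategory} (A : DoubleComplex C).

Definition castH i {W : C} {r s : Z} (E : r = s) (g : Hom W (A i r)) : Hom W (A i s) :=
  match E in _ = s' return Hom W (A i s') with eq_refl => g end.
Definition castV r {W : C} {i j : Z} (E : i = j) (g : Hom W (A i r)) : Hom W (A j r) :=
  match E in _ = j' return Hom W (A j' r) with eq_refl => g end.

Definition din (i r : Z) : Hom (A i (Z.pred r)) (A i r) :=
  @castH i _ _ _ (Z.succ_pred r) (d2 A i (Z.pred r)).
Definition cin (i r : Z) : Hom (A (Z.pred i) r) (A i r) :=
  @castV r _ _ _ (Z.succ_pred i) (d1 A (Z.pred i) r).
Definition eout (i r : Z) : Hom (A i r) (A i (Z.succ r)) := d2 A i r.
Definition fout (i r : Z) : Hom (A i r) (A (Z.succ i) r) := d1 A i r.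
Definition pin (i r : Z) : Hom (A (Z.pred i) (Z.pred r)) (A i r) :=
  din i r ∘ cin i (Z.pred r).
Definition qout (i r : Z) : Hom (A i r) (A (Z.succ i) (Z.succ r)) :=
  d1 A i (Z.succ r) ∘ d2 A i r.

Definition receptor_at (i r : Z) : C := receptor (eout i r) (fout i r) (pin i r).
Definition donor_at (i r : Z) : C := donor (cin i r) (din i r) (qout i r).
Definition Hh_at (i r : Z) : C := homology (din i r) (eout i r).
Definition Hv_at (i r : Z) : C := homology (cin i r) (fout i r).

Definition rec_to_Hh_at (i r : Z) : Hom (receptor_at i r) (Hh_at i r) :=
  rec_to_Hh (din i r) (eout i r) (fout i r) (pin i r).
Definition rec_to_Hv_at (i r : Z) : Hom (receptor_at i r) (Hv_at i r) :=
  rec_to_Hv (cin i r) (eout i r) (fout i r) (pin i r).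
Definition Hh_to_don_at (i r : Z) : Hom (Hh_at i r) (donor_at i r) :=
  Hh_to_don (din i r) (cin i r) (eout i r) (qout i r).
Definition Hv_to_don_at (i r : Z) : Hom (Hv_at i r) (donor_at i r) :=
  Hv_to_don (din i r) (cin i r) (fout i r) (qout i r).
End DCLocal.

(* The proof is a diagram chase carried out with morphisms instead of
   elements: a morphism is tested for being zero, mono or epi by composing it
   with arbitrary morphisms, and "choosing a preimage" becomes "pulling back
   along an epimorphism".

   For (1), the donor of A_{i-1,r} vanishes iff ker q_{i-1,r} = im c + im d
   there; pushed down by c this says that c maps ker(e c) into im p, which is
   exactly what makes ^□A -> H^v(A) and H^h(A) -> A_□ injective.  The receptor
   of A_{i,r+1} vanishes iff ker e ∩ ker f = im p there; pulled back along e
   this says that ker q ⊆ ker e + im c, which makes both maps surjective.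
   Part (2) is the same argument with rows and columns exchanged. *)
From Stdlib Require Import ZArith ClassicalEpsilon Eqdep_dec.
Set Implicit Arguments.
Unset Strict Implicit.

Section AbelianToolkit.
Context {C : AbelianCategory}.

Lemma zero_mor_precomp {X Y Z : C} (f : Hom Y Z) (g : Hom X Y) :
  zero_mor f -> zero_mor (f ∘ g).
Proof.
  intros [Z0 [u [v [HZ ->]]]]. exists Z0, (u ∘ g), v. split; auto.
  symmetry; apply comp_assoc.
Qed.

Lemma zero_mor_postcomp {X Y Z : C} (f : Hom Y Z) (g : Hom X Y) :
  zero_mor g -> zero_mor (f ∘ g).
Proof.
  intros [Z0 [u [v [HZ ->]]]]. exists Z0, u, (f ∘ v). split; auto.
  apply comp_assoc.
Qed.

Lemma zero_mor_unique {X Y : C} (f g : Hom X Y) : zero_mor f -> zero_mor g -> f = g.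
Proof.
  intros [Z1 [u [v [[H1a H1b] ->]]]] [Z2 [u' [v' [[H2a H2b] ->]]]].
  destruct (H1a Z2) as [w _], (H1a Y) as [y0 Hy0], (H2b X) as [x0 Hx0].
  assert (E1 : v' ∘ w = v) by (rewrite (Hy0 v), (Hy0 (v' ∘ w)); auto).
  assert (E2 : u' = w ∘ u) by (rewrite (Hx0 u'), (Hx0 (w ∘ u)); auto).
  rewrite E2, comp_assoc, E1. reflexivity.
Qed.

Lemma zero_mor_exists (X Y : C) : exists z : Hom X Y, zero_mor z.
Proof.
  destruct (ab_zero (acat_ax C)) as [Z0 HZ].
  destruct (proj1 HZ Y) as [v _], (proj2 HZ X) as [u _].
  exists (v ∘ u), Z0, u, v. auto.
Qed.

Lemma zero_mor_from_zero_obj {Z0 Y : C} (f : Hom Z0 Y) : is_zero_obj Z0 -> zero_mor f.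
Proof. intros HZ. exists Z0, (idm Z0), f. split; auto. symmetry; apply comp_idr. Qed.

Lemma zero_mor_to_zero_obj {X Z0 : C} (f : Hom X Z0) : is_zero_obj Z0 -> zero_mor f.
Proof. intros HZ. exists Z0, f, (idm Z0). split; auto. symmetry; apply comp_idl. Qed.

Lemma mono_comp {X Y Z : C} (f : Hom Y Z) (g : Hom X Y) : mono f -> mono g -> mono (f ∘ g).
Proof. intros Hf Hg T a b H. apply Hg, Hf. rewrite !comp_assoc. exact H. Qed.

Lemma epi_comp {X Y Z : C} (f : Hom Y Z) (g : Hom X Y) : epi f -> epi g -> epi (f ∘ g).
Proof. intros Hf Hg T a b H. apply Hf, Hg. rewrite <- !comp_assoc. exact H. Qed.

Lemma mono_of_comp {X Y Z : C} (f : Hom Y Z) (g : Hom X Y) : mono (f ∘ g) -> mono g.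
Proof. intros H T a b E. apply H. rewrite <- !comp_assoc, E. reflexivity. Qed.

Lemma epi_of_comp {X Y Z : C} (f : Hom Y Z) (g : Hom X Y) : epi (f ∘ g) -> epi f.
Proof. intros H T a b E. apply H. rewrite !comp_assoc, E. reflexivity. Qed.

Lemma split_mono {X Y : C} (f : Hom X Y) (g : Hom Y X) : g ∘ f = idm X -> mono f.
Proof.
  intros H T a b E.
  rewrite <- (comp_idl a), <- (comp_idl b), <- H, <- !comp_assoc, E. reflexivity.
Qed.

Lemma split_epi {X Y : C} (f : Hom X Y) (g : Hom Y X) : g ∘ f = idm X -> epi g.
Proof.
  intros H T a b E.
  rewrite <- (comp_idr a), <- (comp_idr b), <- H, !comp_assoc, E. reflexivity.
Qed.

Lemma zero_mor_epi_cancel {X Y W : C} (f : Hom Y W) (e : Hom X Y) :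
  epi e -> zero_mor (f ∘ e) -> zero_mor f.
Proof.
  intros He Hz. destruct (zero_mor_exists Y W) as [z Hz0].
  replace f with z; auto.
  apply He, zero_mor_unique; auto. apply zero_mor_precomp; auto.
Qed.

Lemma zero_mor_mono_cancel {X Y W : C} (m : Hom Y W) (f : Hom X Y) :
  mono m -> zero_mor (m ∘ f) -> zero_mor f.
Proof.
  intros Hm Hz. destruct (zero_mor_exists X Y) as [z Hz0].
  replace f with z; auto.
  apply Hm, zero_mor_unique; auto. apply zero_mor_postcomp; auto.
Qed.

Lemma kernel_mono {A B K : C} (f : Hom A B) (k : Hom K A) : is_kernel f k -> mono k.
Proof.
  intros [H0 H] T g h E.
  assert (Hz : zero_mor (f ∘ (k ∘ g))) by (rewrite comp_assoc; apply zero_mor_precomp; auto).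
  destruct (H _ _ Hz) as [u [Hu Huq]].
  rewrite <- (Huq g eq_refl), <- (Huq h (eq_sym E)). reflexivity.
Qed.

Lemma cokernel_epi {A B Q : C} (f : Hom A B) (c : Hom B Q) : is_cokernel f c -> epi c.
Proof.
  intros [H0 H] T g h E.
  assert (Hz : zero_mor ((g ∘ c) ∘ f)) by (rewrite <- comp_assoc; apply zero_mor_postcomp; auto).
  destruct (H _ _ Hz) as [u [Hu Huq]].
  rewrite <- (Huq g eq_refl), <- (Huq h (eq_sym E)). reflexivity.
Qed.

Lemma lift_spec {A B K T : C} (f : Hom A B) (k : Hom K A) (y : Hom T A) :
  is_kernel f k -> zero_mor (f ∘ y) -> k ∘ lift k y = y.
Proof.
  intros Hk Hz. unfold lift. apply epsilon_spec.
  destruct (proj2 Hk _ _ Hz) as [u [Hu _]]. eauto.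
Qed.

Lemma colift_spec {A B Q T : C} (f : Hom A B) (c : Hom B Q) (y : Hom B T) :
  is_cokernel f c -> zero_mor (y ∘ f) -> colift c y ∘ c = y.
Proof.
  intros Hk Hz. unfold colift. apply epsilon_spec.
  destruct (proj2 Hk _ _ Hz) as [u [Hu _]]. eauto.
Qed.

Lemma kerM_kernel {A B : C} (f : Hom A B) : is_kernel f (kerM f).
Proof. unfold kerM. apply (proj2_sig (constructive_indefinite_description _ _)). Qed.

Lemma cokerM_cokernel {A B : C} (f : Hom A B) : is_cokernel f (cokerM f).
Proof. unfold cokerM. apply (proj2_sig (constructive_indefinite_description _ _)). Qed.

Lemma pr_product {A B : C} : is_product (pr1 A B) (pr2 A B).
Proof. unfold pr2. apply (proj2_sig (constructive_indefinite_description _ _)). Qed.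

Lemma in_coproduct {A B : C} : is_coproduct (in1 A B) (in2 A B).
Proof. unfold in2. apply (proj2_sig (constructive_indefinite_description _ _)). Qed.

Lemma product_swap {P A B : C} (p1 : Hom P A) (p2 : Hom P B) :
  is_product p1 p2 -> is_product p2 p1.
Proof.
  intros H X f g. destruct (H X g f) as [u [[H1 H2] Hu]].
  exists u. split; auto. intros v [V1 V2]. apply Hu; auto.
Qed.

Lemma coproduct_swap {S A B : C} (i1 : Hom A S) (i2 : Hom B S) :
  is_coproduct i1 i2 -> is_coproduct i2 i1.
Proof.
  intros H X f g. destruct (H X g f) as [u [[H1 H2] Hu]].
  exists u. split; auto. intros v [V1 V2]. apply Hu; auto.
Qed.

Lemma product_ext {P A B X : C} (p1 : Hom P A) (p2 : Hom P B) (x y : Hom X P) :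
  is_product p1 p2 -> p1 ∘ x = p1 ∘ y -> p2 ∘ x = p2 ∘ y -> x = y.
Proof.
  intros H E1 E2. destruct (H _ (p1 ∘ x) (p2 ∘ x)) as [u [_ Hu]].
  rewrite <- (Hu x (conj eq_refl eq_refl)). apply Hu; auto.
Qed.

Lemma coproduct_ext {S A B X : C} (i1 : Hom A S) (i2 : Hom B S) (x y : Hom S X) :
  is_coproduct i1 i2 -> x ∘ i1 = y ∘ i1 -> x ∘ i2 = y ∘ i2 -> x = y.
Proof.
  intros H E1 E2. destruct (H _ (x ∘ i1) (x ∘ i2)) as [u [_ Hu]].
  rewrite <- (Hu x (conj eq_refl eq_refl)). apply Hu; auto.
Qed.

Lemma product_zero_mor_iff {P A B X T : C} (p1 : Hom P A) (p2 : Hom P B) (g : Hom X P)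
  (y : Hom T X) :
  is_product p1 p2 -> zero_mor (g ∘ y) <-> zero_mor (p1 ∘ g ∘ y) /\ zero_mor (p2 ∘ g ∘ y).
Proof.
  intros H. split.
  - intros Z. rewrite <- !comp_assoc. split; apply zero_mor_postcomp; auto.
  - intros [Z1 Z2]. destruct (zero_mor_exists T P) as [z Hz].
    replace (g ∘ y) with z; auto.
    apply (product_ext H); apply zero_mor_unique; rewrite ?comp_assoc; auto;
      apply zero_mor_postcomp; auto.
Qed.

Lemma coproduct_zero_mor {S A B X : C} (i1 : Hom A S) (i2 : Hom B S) (x : Hom S X) :
  is_coproduct i1 i2 -> zero_mor (x ∘ i1) -> zero_mor (x ∘ i2) -> zero_mor x.
Proof.
  intros H Z1 Z2. destruct (zero_mor_exists S X) as [z Hz].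
  replace x with z; auto.
  apply (coproduct_ext H); apply zero_mor_unique; auto; apply zero_mor_precomp; auto.
Qed.

Lemma pairing_spec {X A B : C} (f : Hom X A) (g : Hom X B) :
  pr1 A B ∘ pairing f g = f /\ pr2 A B ∘ pairing f g = g.
Proof.
  unfold pairing. apply epsilon_spec.
  destruct (@pr_product A B X f g) as [u [Hu _]]. eauto.
Qed.

Lemma copairing_spec {A B X : C} (f : Hom A X) (g : Hom B X) :
  copairing f g ∘ in1 A B = f /\ copairing f g ∘ in2 A B = g.
Proof.
  unfold copairing. apply epsilon_spec.
  destruct (@in_coproduct A B X f g) as [u [Hu _]]. eauto.
Qed.

Lemma mono_epi_iso {X Y : C} (m : Hom X Y) : mono m -> epi m -> is_iso m.
Proof.
  intros Hm He. destruct (ab_mono_normal (acat_ax C) Hm) as [W [g Hk]].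
  assert (Zg : zero_mor g) by (apply (zero_mor_epi_cancel He), (proj1 Hk)).
  assert (Z2 : zero_mor (g ∘ idm Y)) by (apply zero_mor_precomp; auto).
  destruct (proj2 Hk _ _ Z2) as [u [Hu _]].
  exists u. split; auto. apply Hm. rewrite comp_assoc, Hu, comp_idl, comp_idr. auto.
Qed.

(* The equalizer of u and v is the kernel of (g ∘ ⟨u, v⟩), where g has the
   diagonal of Z × Z as kernel. *)
Lemma equalizer_exists {M Z : C} (u v : Hom M Z) : exists (E : C) (q : Hom E M),
  mono q /\ u ∘ q = v ∘ q /\ forall T (w : Hom T M), u ∘ w = v ∘ w -> exists a, w = q ∘ a.
Proof.
  destruct (pairing_spec (idm Z) (idm Z)) as [D1 D2].
  set (δ := pairing (idm Z) (idm Z)) in *.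
  destruct (ab_mono_normal (acat_ax C) (split_mono D1)) as [W [g Hk]].
  destruct (pairing_spec u v) as [U1 U2]. set (uv := pairing u v) in *.
  assert (Hq := kerM_kernel (g ∘ uv)). set (q := kerM (g ∘ uv)) in *.
  exists (kerO (g ∘ uv)), q. split; [|split].
  - exact (kernel_mono Hq).
  - assert (Z1 : zero_mor (g ∘ (uv ∘ q))) by (rewrite comp_assoc; apply (proj1 Hq)).
    destruct (proj2 Hk _ _ Z1) as [z [Hz _]].
    rewrite <- U1, <- U2, <- !comp_assoc, <- Hz, !comp_assoc. fold δ. rewrite D1, D2. auto.
  - intros T w E. assert (Ew : uv ∘ w = δ ∘ (u ∘ w)).
    { apply (product_ext (pr_product (A:=Z) (B:=Z))); rewrite !comp_assoc; fold δ;
        rewrite ?D1, ?D2, ?U1, ?U2, comp_idl; auto. }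
    assert (Z1 : zero_mor ((g ∘ uv) ∘ w)).
    { rewrite <- comp_assoc, Ew, comp_assoc. apply zero_mor_precomp, (proj1 Hk). }
    destruct (proj2 Hq _ _ Z1) as [a [Ha _]]. exists a. auto.
Qed.

Lemma image_factorization {A B Q M : C} (f : Hom A B) (pi : Hom B Q) (m : Hom M B) :
  is_cokernel f pi -> is_kernel pi m -> m ∘ lift m f = f /\ epi (lift m f).
Proof.
  intros Hc Hk. assert (Hmf : m ∘ lift m f = f) by (apply (lift_spec Hk), (proj1 Hc)).
  split; auto. intros T t t' E.
  destruct (equalizer_exists t t') as [Eo [q [Hq [Eq Hun]]]].
  destruct (Hun _ _ E) as [a Ha].
  destruct (ab_mono_normal (acat_ax C) (mono_comp (kernel_mono Hk) Hq)) as [W [g Hg]].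
  assert (Zgf : zero_mor (g ∘ f)).
  { rewrite <- Hmf, Ha, !comp_assoc. apply zero_mor_precomp.
    rewrite <- comp_assoc. apply (proj1 Hg). }
  destruct (proj2 Hc _ _ Zgf) as [h [Hh _]].
  assert (Zgm : zero_mor (g ∘ m))
    by (rewrite <- Hh, <- comp_assoc; apply zero_mor_postcomp, (proj1 Hk)).
  destruct (proj2 Hg _ _ Zgm) as [b [Hb _]].
  assert (Eqb : q ∘ b = idm _).
  { apply (kernel_mono Hk). rewrite comp_idr, comp_assoc. auto. }
  rewrite <- (comp_idr t), <- (comp_idr t'), <- Eqb, !comp_assoc, Eq. auto.
Qed.

Lemma epi_cokernel_of_kernel {Y I K : C} (e : Hom Y I) (k : Hom K Y) :
  epi e -> is_kernel e k -> is_cokernel k e.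
Proof.
  intros He Hk. destruct (ab_epi_normal (acat_ax C) He) as [X0 [g0 Hc]].
  split; [exact (proj1 Hk)|]. intros W t Zt.
  destruct (proj2 Hk _ _ (proj1 Hc)) as [a [Ha _]].
  apply (proj2 Hc). rewrite <- Ha, comp_assoc. apply zero_mor_precomp; auto.
Qed.

Lemma kernel_cancel_mono {A B B' K : C} (m : Hom B B') (g : Hom A B) (k : Hom K A) :
  mono m -> is_kernel (m ∘ g) k -> is_kernel g k.
Proof.
  intros Hm [H1 H2]. split.
  - apply (zero_mor_mono_cancel Hm). rewrite comp_assoc; auto.
  - intros X y Zy. apply H2. rewrite <- comp_assoc. apply zero_mor_postcomp; auto.
Qed.

Lemma mono_of_zero_test {A B : C} (f : Hom A B) :
  (forall T (y : Hom T A), zero_mor (f ∘ y) -> zero_mor y) -> mono f.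
Proof.
  intros H.
  destruct (image_factorization (cokerM_cokernel f) (kerM_kernel (cokerM f))) as [Hmf He].
  set (m := kerM (cokerM f)) in *. set (e := lift m f) in *.
  assert (Hc := epi_cokernel_of_kernel He (kerM_kernel e)).
  assert (Zk : zero_mor (kerM e)).
  { apply H. replace (f ∘ kerM e) with (m ∘ (e ∘ kerM e)) by (rewrite comp_assoc, Hmf; auto).
    apply zero_mor_postcomp, (proj1 (kerM_kernel e)). }
  assert (Z1 : zero_mor (idm _ ∘ kerM e)) by (apply zero_mor_postcomp; auto).
  destruct (proj2 Hc _ _ Z1) as [u [Hu _]].
  rewrite <- Hmf. apply mono_comp.
  - exact (kernel_mono (kerM_kernel _)).
  - exact (split_mono Hu).
Qed.

Lemma epi_of_zero_test {A B : C} (f : Hom A B) :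
  (forall W (t : Hom B W), zero_mor (t ∘ f) -> zero_mor t) -> epi f.
Proof.
  intros H.
  destruct (image_factorization (cokerM_cokernel f) (kerM_kernel (cokerM f))) as [Hmf He].
  set (m := kerM (cokerM f)) in *.
  assert (Zc : zero_mor (cokerM f)) by (apply H, (proj1 (cokerM_cokernel f))).
  assert (Z1 : zero_mor (cokerM f ∘ idm _)) by (apply zero_mor_precomp; auto).
  destruct (proj2 (kerM_kernel (cokerM f)) _ _ Z1) as [u [Hu _]]. fold m in Hu.
  rewrite <- Hmf. apply epi_comp; auto. exact (split_epi Hu).
Qed.

End AbelianToolkit.

Section DiagramChase.
Context {C : AbelianCategory}.

(* [im a ⊆ im b], tested against cokernels. *)
Definition subimage {X Y Z : C} (a : Hom Y X) (b : Hom Z X) : Prop :=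
  forall W (t : Hom X W), zero_mor (t ∘ b) -> zero_mor (t ∘ a).

(* [im j + im m = Y]. *)
Definition jointly_epi {J M Y : C} (j : Hom J Y) (m : Hom M Y) : Prop :=
  forall W (s : Hom Y W), zero_mor (s ∘ j) -> zero_mor (s ∘ m) -> zero_mor s.

Lemma subimage_refl {X Y : C} (a : Hom Y X) : subimage a a.
Proof. intros W t Zt. exact Zt. Qed.

Lemma subimage_of_zero_mor {X Y Z : C} (a : Hom Y X) (b : Hom Z X) :
  zero_mor a -> subimage a b.
Proof. intros Za W t _. apply zero_mor_postcomp, Za. Qed.

Lemma colift_mono {K A0 R0 H0 : C} (g : Hom A0 K) (pi : Hom K R0) (psi : Hom K H0)
  (phi : Hom R0 H0) :
  is_cokernel g pi -> phi ∘ pi = psi -> zero_mor (pi ∘ kerM psi) -> mono phi.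
Proof.
  intros Hc Hpp Z.
  destruct (image_factorization (cokerM_cokernel psi) (kerM_kernel (cokerM psi))) as [Hm He].
  set (m := kerM (cokerM psi)) in *. set (e := lift m psi) in *.
  assert (Mm : mono m) by exact (kernel_mono (kerM_kernel _)).
  assert (Hke : is_kernel e (kerM psi)).
  { apply (kernel_cancel_mono Mm). rewrite Hm. apply kerM_kernel. }
  assert (Zeg : zero_mor (e ∘ g)).
  { apply (zero_mor_mono_cancel Mm).
    rewrite comp_assoc, Hm, <- Hpp, <- comp_assoc. apply zero_mor_postcomp, (proj1 Hc). }
  destruct (proj2 Hc _ _ Zeg) as [b [Hb _]].
  destruct (proj2 (epi_cokernel_of_kernel He Hke) _ _ Z) as [a [Ha _]].
  assert (Pe : epi pi) by exact (cokernel_epi Hc).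
  assert (Hab : a ∘ b = idm _).
  { apply Pe. rewrite <- comp_assoc, Hb, Ha, comp_idl. auto. }
  replace phi with (m ∘ b) by (apply Pe; rewrite Hpp, <- comp_assoc, Hb; auto).
  apply mono_comp; auto. exact (split_mono Hab).
Qed.

Lemma lift_epi {Y G0 K M0 : C} (g : Hom Y G0) (k : Hom K Y) (psi : Hom M0 Y)
  (phi : Hom M0 K) :
  is_kernel g k -> k ∘ phi = psi -> subimage k psi -> epi phi.
Proof.
  intros Hk Hpp Ht.
  destruct (image_factorization (cokerM_cokernel psi) (kerM_kernel (cokerM psi))) as [Hm He].
  set (m := kerM (cokerM psi)) in *. set (e := lift m psi) in *.
  assert (Zck : zero_mor (cokerM psi ∘ k)) by (apply Ht, (proj1 (cokerM_cokernel psi))).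
  assert (Zgm : zero_mor (g ∘ m)).
  { apply (zero_mor_epi_cancel He).
    rewrite <- comp_assoc, Hm, <- Hpp, comp_assoc. apply zero_mor_precomp, (proj1 Hk). }
  destruct (proj2 Hk _ _ Zgm) as [b [Hb _]].
  destruct (proj2 (kerM_kernel (cokerM psi)) _ _ Zck) as [a [Ha _]]. fold m in Ha.
  assert (Mk : mono k) by exact (kernel_mono Hk).
  assert (Hba : b ∘ a = idm _).
  { apply Mk. rewrite comp_assoc, Hb, Ha, comp_idr. auto. }
  replace phi with (b ∘ e) by (apply Mk; rewrite Hpp, comp_assoc, Hb; auto).
  apply epi_comp; auto. exact (split_epi Hba).
Qed.

Lemma pullback_epi {U0 I N : C} (e : Hom U0 I) (w : Hom N I) :
  epi e -> mono w -> exists (P : C) (k : Hom P U0) (r : Hom P N), epi r /\ e ∘ k = w ∘ r.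
Proof.
  intros He Hw. destruct (ab_mono_normal (acat_ax C) Hw) as [G [g Hk]].
  set (k := kerM (g ∘ e)).
  assert (Zk : zero_mor (g ∘ (e ∘ k)))
    by (rewrite comp_assoc; apply (proj1 (kerM_kernel _))).
  assert (Hwr := lift_spec Hk Zk). set (r := lift w (e ∘ k)) in *.
  exists (kerO (g ∘ e)), k, r. split; auto.
  apply (lift_epi Hk Hwr). intros W t Zt.
  destruct (image_factorization (cokerM_cokernel g) (kerM_kernel (cokerM g))) as [Hm Hge].
  set (i := kerM (cokerM g)) in *. set (gm := lift i g) in *.
  assert (Mi : mono i) by exact (kernel_mono (kerM_kernel _)).
  assert (Hkg : is_kernel gm w) by (apply (kernel_cancel_mono Mi); rewrite Hm; auto).
  assert (Hkge : is_kernel (gm ∘ e) k).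
  { apply (kernel_cancel_mono Mi). rewrite comp_assoc, Hm. apply kerM_kernel. }
  assert (Hc := epi_cokernel_of_kernel (epi_comp Hge He) Hkge).
  assert (Z1 : zero_mor ((t ∘ e) ∘ k)) by (rewrite <- comp_assoc; auto).
  destruct (proj2 Hc _ _ Z1) as [s [Hs _]].
  replace t with (s ∘ gm) by (apply He; rewrite <- comp_assoc; auto).
  rewrite <- comp_assoc. apply zero_mor_postcomp, (proj1 Hkg).
Qed.

(* Every subobject of [im d] is covered by an epimorphism that lifts along [d]. *)
Lemma image_cover {L0 X0 Q0 N : C} (d : Hom L0 X0) (pi : Hom X0 Q0) (w : Hom N X0) :
  is_cokernel d pi -> mono w -> zero_mor (pi ∘ w) ->
  exists (P : C) (k : Hom P L0) (r : Hom P N), epi r /\ w ∘ r = d ∘ k.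
Proof.
  intros Hc Hw Z.
  destruct (image_factorization Hc (kerM_kernel pi)) as [Hm He].
  set (m := kerM pi) in *. set (e := lift m d) in *.
  assert (Hv := lift_spec (kerM_kernel pi) Z). fold m in Hv. set (v := lift m w) in *.
  assert (Mv : mono v) by (apply (mono_of_comp (f := m)); rewrite Hv; auto).
  destruct (pullback_epi He Mv) as [P [k [r [Hr E]]]].
  exists P, k, r. split; auto.
  rewrite <- Hv, <- comp_assoc, <- E, comp_assoc, Hm. auto.
Qed.

Lemma kernel_jointly_epi {Y Z0 J M : C} (h : Hom Y Z0) (j : Hom J Y) (m : Hom M Y) :
  is_kernel h j -> epi (h ∘ m) -> jointly_epi j m.
Proof.
  intros Hk Ehm W s Zj Zm.
  destruct (image_factorization (cokerM_cokernel h) (kerM_kernel (cokerM h))) as [Hi Hg].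
  set (i := kerM (cokerM h)) in *. set (gm := lift i h) in *.
  assert (Mi : mono i) by exact (kernel_mono (kerM_kernel _)).
  assert (Hkg : is_kernel gm j) by (apply (kernel_cancel_mono Mi); rewrite Hi; auto).
  destruct (proj2 (epi_cokernel_of_kernel Hg Hkg) _ _ Zj) as [a [Ha _]].
  assert (Ei : epi i).
  { apply (epi_of_comp (g := gm ∘ m)). rewrite comp_assoc, Hi. auto. }
  destruct (mono_epi_iso Mi Ei) as [i' [I1 I2]].
  assert (Egm : epi (gm ∘ m)).
  { replace (gm ∘ m) with (i' ∘ (h ∘ m)).
    - apply epi_comp; auto. exact (split_epi I1).
    - rewrite <- (comp_idl (gm ∘ m)), <- I1, <- comp_assoc, (comp_assoc i gm m), Hi. auto. }
  rewrite <- Ha. apply zero_mor_precomp.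
  apply (zero_mor_epi_cancel Egm). rewrite comp_assoc, Ha. auto.
Qed.

Lemma kernel_restrict {X0 R0 G0 H0 K1 Kh : C} (e : Hom X0 R0) (g1 : Hom X0 G0)
  (k1 : Hom K1 X0) (h : Hom X0 H0) (kh : Hom Kh X0) (j : Hom K1 Kh) :
  is_kernel g1 k1 ->
  (forall T (y : Hom T X0), zero_mor (e ∘ y) -> zero_mor (h ∘ y) -> zero_mor (g1 ∘ y)) ->
  zero_mor (e ∘ k1) -> is_kernel h kh -> kh ∘ j = k1 -> is_kernel (e ∘ kh) j.
Proof.
  intros Hk1 Hg Zek Hkh Hj. split.
  - rewrite <- comp_assoc, Hj. auto.
  - intros T z Zz.
    assert (Z2 : zero_mor (g1 ∘ (kh ∘ z))).
    { apply Hg; rewrite comp_assoc; auto. apply zero_mor_precomp, (proj1 Hkh). }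
    destruct (proj2 Hk1 _ _ Z2) as [w [Hw _]].
    assert (Mj : mono j)
      by (apply (mono_of_comp (f := kh)); rewrite Hj; exact (kernel_mono Hk1)).
    assert (Ew : j ∘ w = z).
    { apply (kernel_mono Hkh). rewrite comp_assoc, Hj. auto. }
    exists w. split; auto.
    intros w' Hw'. apply Mj. rewrite Hw'. auto.
Qed.

End DiagramChase.

Section VanishingConditions.
Context {C : AbelianCategory}.

Definition maps_kernel_into_image {U X R UL : C} (c : Hom U X) (e : Hom X R)
  (p : Hom UL X) : Prop :=
  forall T (u : Hom T U), zero_mor (e ∘ c ∘ u) -> subimage (c ∘ u) p.

(* [ker q ⊆ ker e + im c], tested on every subobject [y] of [ker q] through
   which [c] factors. *)
Definition kernel_covered {X R DR U : C} (q : Hom X DR) (e : Hom X R) (c : Hom U X) : Prop :=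
  forall Y (y : Hom Y X) J (j : Hom J Y) (m : Hom U Y),
    zero_mor (q ∘ y) -> is_kernel (e ∘ y) j -> y ∘ m = c -> jointly_epi j m.

(* The donor is the kernel of the map [coker [c, d] -> DR] induced by [q], so it
   vanishes exactly when [ker q ⊆ im c + im d]. *)
Lemma donor_zero_kernel_subimage {U UU UL DR : C} (cU : Hom UU U) (dU : Hom UL U)
  (qU : Hom U DR) :
  zero_mor (qU ∘ cU) -> zero_mor (qU ∘ dU) -> is_zero_obj (donor cU dU qU) ->
  forall P (u : Hom P U), zero_mor (qU ∘ u) -> subimage u (copairing cU dU).
Proof.
  intros Z1 Z2 HZ P u Zu.
  destruct (copairing_spec cU dU) as [C1 C2]. set (H := copairing cU dU) in *.
  assert (Hq : zero_mor (qU ∘ H)).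
  { apply (coproduct_zero_mor (in_coproduct (A:=UU) (B:=UL)));
      rewrite <- comp_assoc; [rewrite C1|rewrite C2]; auto. }
  assert (HQ := cokerM_cokernel H). set (Qpi := cokerM H) in *.
  assert (Hqb := colift_spec HQ Hq). set (qbar := colift Qpi qU) in *.
  assert (Mq : mono qbar).
  { apply mono_of_zero_test. intros T y Zy.
    rewrite <- (lift_spec (kerM_kernel _) Zy).
    apply zero_mor_postcomp, zero_mor_to_zero_obj, HZ. }
  assert (Zu' : zero_mor (Qpi ∘ u))
    by (apply (zero_mor_mono_cancel Mq); rewrite comp_assoc, Hqb; auto).
  assert (Hw := lift_spec (kerM_kernel Qpi) Zu').
  destruct (image_factorization HQ (kerM_kernel Qpi)) as [Hm He].
  intros W t Zt.
  assert (Ztm : zero_mor (t ∘ kerM Qpi)).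
  { apply (zero_mor_epi_cancel He). rewrite <- comp_assoc, Hm. exact Zt. }
  rewrite <- Hw, comp_assoc. apply zero_mor_precomp; auto.
Qed.

Lemma donor_zero_maps_kernel_into_image {U UU UL DR X R Y : C} (cU : Hom UU U)
  (dU : Hom UL U) (qU : Hom U DR) (c : Hom U X) (e : Hom X R) (p : Hom Y X) :
  zero_mor (qU ∘ cU) -> zero_mor (qU ∘ dU) -> is_zero_obj (donor cU dU qU) ->
  subimage (c ∘ cU) p -> subimage (c ∘ dU) p -> (exists g, qU = g ∘ (e ∘ c)) ->
  maps_kernel_into_image c e p.
Proof.
  intros Z1 Z2 HZ S1 S2 [g Hg] T u Zu W t Zt.
  destruct (copairing_spec cU dU) as [C1 C2].
  rewrite comp_assoc. apply (donor_zero_kernel_subimage Z1 Z2 HZ).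
  - rewrite Hg, <- comp_assoc. apply zero_mor_postcomp, Zu.
  - apply (coproduct_zero_mor (in_coproduct (A:=UU) (B:=UL)));
      rewrite <- !comp_assoc; [rewrite C1; apply S1|rewrite C2; apply S2]; auto.
Qed.

(* The receptor is the cokernel of [p'] factored through [ker e' ∩ ker f'], so
   it vanishes exactly when [ker e' ∩ ker f' = im p']. *)
Lemma receptor_zero_kernel_covered {X R RR RD UL DR U : C} (e' : Hom R RR) (f' : Hom R RD)
  (p' : Hom UL R) (x : Hom X R) (q : Hom X DR) (c : Hom U X) :
  zero_mor (e' ∘ p') -> zero_mor (f' ∘ p') -> is_zero_obj (receptor e' f' p') ->
  (forall T (y : Hom T X), zero_mor (q ∘ y) -> zero_mor (e' ∘ x ∘ y)) ->
  (forall T (y : Hom T X), zero_mor (q ∘ y) -> zero_mor (f' ∘ x ∘ y)) ->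
  (exists b, p' = x ∘ c ∘ b) -> kernel_covered q x c.
Proof.
  intros Z1 Z2 HZ Hx1 Hx2 [b Hb] Y y J j m Zy Hk Hm.
  destruct (pairing_spec e' f') as [P1 P2]. set (G := pairing e' f') in *.
  assert (Gz : forall T (z : Hom T R),
             zero_mor (e' ∘ z) -> zero_mor (f' ∘ z) -> zero_mor (G ∘ z)).
  { intros T z Za Zb. apply (product_zero_mor_iff G z (pr_product (A:=RR) (B:=RD))).
    rewrite P1, P2. auto. }
  assert (HkR := kerM_kernel G). set (kR := kerM G) in *.
  assert (HpR : kR ∘ lift kR p' = p') by (apply (lift_spec HkR), Gz; auto).
  assert (Ep : epi (lift kR p')).
  { apply epi_of_zero_test. intros W t Zt.
    destruct (proj2 (cokerM_cokernel (lift kR p')) _ t Zt) as [u [Hu _]].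
    rewrite <- Hu. apply zero_mor_precomp, zero_mor_from_zero_obj, HZ. }
  assert (Hh : kR ∘ lift kR (x ∘ y) = x ∘ y)
    by (apply (lift_spec HkR), Gz; rewrite comp_assoc; auto).
  set (h := lift kR (x ∘ y)) in *.
  assert (Hkh : is_kernel h j)
    by (apply (kernel_cancel_mono (kernel_mono HkR)); rewrite Hh; auto).
  assert (Ehm : h ∘ m ∘ b = lift kR p').
  { apply (kernel_mono HkR).
    rewrite !comp_assoc, Hh, <- (comp_assoc x y m), Hm, HpR. symmetry; exact Hb. }
  apply (kernel_jointly_epi Hkh), (epi_of_comp (g := b)). rewrite Ehm. exact Ep.
Qed.

End VanishingConditions.

Section ReceptorToHomology.
Context {C : AbelianCategory} {X U R D UL DR P : C}.
Variables (c : Hom U X) (e : Hom X R) (f : Hom X D) (p : Hom UL X) (q : Hom X DR)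
  (p1 : Hom P R) (p2 : Hom P D) (G : Hom X P).
Hypothesis HP : is_product p1 p2.
Hypothesis HG1 : p1 ∘ G = e.
Hypothesis HG2 : p2 ∘ G = f.
Hypothesis Zep : zero_mor (e ∘ p).
Hypothesis Zfc : zero_mor (f ∘ c).
Hypothesis Hpc : exists a, p = c ∘ a.
Hypothesis Hqf : exists g, q = g ∘ f.
Hypothesis Hdonor : maps_kernel_into_image c e p.
Hypothesis Hreceptor : kernel_covered q e c.

Local Notation kG := (kerM G).
Local Notation kf := (kerM f).
Local Notation p' := (lift kG p).
Local Notation c' := (lift kf c).
Local Notation j := (lift kf kG).
(* [phi] is the intramural map ^□A -> ker f / im c; an arbitrary product [G]
   stands for ⟨e, f⟩ so that the roles of [e] and [f] can be exchanged. *)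
Local Notation phi := (colift (cokerM p') (cokerM c' ∘ j)).

Let G_zero_mor {T : C} (y : Hom T X) :
  zero_mor (e ∘ y) -> zero_mor (f ∘ y) -> zero_mor (G ∘ y).
Proof. intros Ze Zf. apply (product_zero_mor_iff _ _ HP). rewrite HG1, HG2. auto. Qed.

Let kG_zero : zero_mor (e ∘ kG) /\ zero_mor (f ∘ kG).
Proof. rewrite <- HG1, <- HG2. apply (product_zero_mor_iff _ _ HP), kerM_kernel. Qed.

Let p'_spec : kG ∘ p' = p.
Proof.
  apply (lift_spec (kerM_kernel G)), G_zero_mor; auto.
  destruct Hpc as [a Ha]. rewrite Ha, comp_assoc. apply zero_mor_precomp, Zfc.
Qed.

Let c'_spec : kf ∘ c' = c.
Proof. exact (lift_spec (kerM_kernel f) Zfc). Qed.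

Let j_spec : kf ∘ j = kG.
Proof. exact (lift_spec (kerM_kernel f) (proj2 kG_zero)). Qed.

Let phi_spec : phi ∘ cokerM p' = cokerM c' ∘ j.
Proof.
  apply (colift_spec (cokerM_cokernel p')).
  destruct Hpc as [a Ha].
  assert (E : j ∘ p' = c' ∘ a).
  { apply (kernel_mono (kerM_kernel f)). rewrite !comp_assoc, j_spec, c'_spec, p'_spec. exact Ha. }
  rewrite <- comp_assoc, E, comp_assoc. apply zero_mor_precomp, (proj1 (cokerM_cokernel c')).
Qed.

Lemma receptor_to_homology_mono : mono phi.
Proof.
  apply (colift_mono (cokerM_cokernel p') phi_spec).
  assert (Hn := kerM_kernel (cokerM c' ∘ j)). set (n := kerM (cokerM c' ∘ j)) in *.
  assert (Mj : mono j).
  { apply (mono_of_comp (f := kf)). rewrite j_spec. exact (kernel_mono (kerM_kernel G)). }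
  assert (Z1 : zero_mor (cokerM c' ∘ (j ∘ n))) by (rewrite comp_assoc; exact (proj1 Hn)).
  destruct (image_cover (cokerM_cokernel c') (mono_comp Mj (kernel_mono Hn)) Z1)
    as [P0 [u [r [Hr E1]]]].
  assert (E2 : kG ∘ n ∘ r = c ∘ u).
  { transitivity (kf ∘ (j ∘ n ∘ r)); [rewrite !comp_assoc, j_spec; auto|].
    rewrite E1, comp_assoc, c'_spec. auto. }
  assert (Zu : zero_mor (e ∘ c ∘ u)).
  { rewrite <- comp_assoc, <- E2, !comp_assoc.
    apply zero_mor_precomp, zero_mor_precomp, (proj1 kG_zero). }
  assert (Z3 : zero_mor (cokerM p ∘ (kG ∘ n))).
  { apply (zero_mor_epi_cancel Hr). rewrite <- comp_assoc, E2.
    apply (Hdonor Zu), (proj1 (cokerM_cokernel p)). }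
  destruct (image_cover (cokerM_cokernel p)
              (mono_comp (kernel_mono (kerM_kernel G)) (kernel_mono Hn)) Z3)
    as [P1 [u' [r' [Hr' E3]]]].
  assert (E4 : n ∘ r' = p' ∘ u').
  { apply (kernel_mono (kerM_kernel G)). rewrite !comp_assoc, E3, p'_spec. auto. }
  apply (zero_mor_epi_cancel Hr'). rewrite <- comp_assoc, E4, comp_assoc.
  apply zero_mor_precomp, (proj1 (cokerM_cokernel p')).
Qed.

Lemma receptor_to_homology_epi : epi phi.
Proof.
  apply (epi_of_comp (g := cokerM p')). rewrite phi_spec.
  apply epi_of_zero_test. intros W t Zt.
  apply (zero_mor_epi_cancel (cokernel_epi (cokerM_cokernel c'))).
  destruct Hqf as [g Hg].
  apply (Hreceptor (y := kf) (j := j) (m := c')).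
  - rewrite Hg, <- comp_assoc. apply zero_mor_postcomp, (proj1 (kerM_kernel f)).
  - apply (kernel_restrict (g1 := G) (h := f) (kerM_kernel G)); auto.
    + exact (proj1 kG_zero).
    + apply kerM_kernel.
  - exact c'_spec.
  - rewrite <- comp_assoc. exact Zt.
  - rewrite <- comp_assoc. apply zero_mor_postcomp, (proj1 (cokerM_cokernel c')).
Qed.

Lemma receptor_to_homology_iso : is_iso phi.
Proof. exact (mono_epi_iso receptor_to_homology_mono receptor_to_homology_epi). Qed.

End ReceptorToHomology.

Section HomologyToDonor.
Context {C : AbelianCategory} {X L U R UL DR S : C}.
Variables (d : Hom L X) (c : Hom U X) (e : Hom X R) (p : Hom UL X) (q : Hom X DR)
  (i1 : Hom U S) (i2 : Hom L S) (H : Hom S X).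
Hypothesis HS : is_coproduct i1 i2.
Hypothesis HH1 : H ∘ i1 = c.
Hypothesis HH2 : H ∘ i2 = d.
Hypothesis Zed : zero_mor (e ∘ d).
Hypothesis Zqc : zero_mor (q ∘ c).
Hypothesis Hpd : exists a, p = d ∘ a.
Hypothesis Hqe : exists g, q = g ∘ e.
Hypothesis Hdonor : maps_kernel_into_image c e p.
Hypothesis Hreceptor : kernel_covered q e c.

Local Notation ke := (kerM e).
Local Notation d' := (lift ke d).
Local Notation Qpi := (cokerM H).
Local Notation qbar := (colift Qpi q).
Local Notation dk := (kerM qbar).
Local Notation l := (lift dk (Qpi ∘ ke)).
(* [chi] is the intramural map ker e / im d -> A_□; an arbitrary coproduct [H]
   stands for [c, d] so that the roles of [c] and [d] can be exchanged. *)
Local Notation chi := (colift (cokerM d') l).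

Let d'_spec : ke ∘ d' = d.
Proof. exact (lift_spec (kerM_kernel e) Zed). Qed.

Let q_ke_zero : zero_mor (q ∘ ke).
Proof.
  destruct Hqe as [g Hg]. rewrite Hg, <- comp_assoc.
  apply zero_mor_postcomp, (proj1 (kerM_kernel e)).
Qed.

Let qbar_spec : qbar ∘ Qpi = q.
Proof.
  apply (colift_spec (cokerM_cokernel H)), (coproduct_zero_mor HS);
    rewrite <- comp_assoc; [rewrite HH1|rewrite HH2]; auto.
  destruct Hqe as [g Hg]. rewrite Hg, <- comp_assoc. apply zero_mor_postcomp, Zed.
Qed.

Let l_spec : dk ∘ l = Qpi ∘ ke.
Proof.
  apply (lift_spec (kerM_kernel qbar)). rewrite comp_assoc, qbar_spec. exact q_ke_zero.
Qed.

Let chi_spec : chi ∘ cokerM d' = l.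
Proof.
  apply (colift_spec (cokerM_cokernel d')), (zero_mor_mono_cancel (kernel_mono (kerM_kernel qbar))).
  rewrite comp_assoc, l_spec, <- comp_assoc, d'_spec, <- HH2, comp_assoc.
  apply zero_mor_precomp, (proj1 (cokerM_cokernel H)).
Qed.

Lemma homology_to_donor_mono : mono chi.
Proof.
  apply (colift_mono (cokerM_cokernel d') chi_spec).
  assert (Hn := kerM_kernel l). set (n := kerM l) in *.
  assert (Z1 : zero_mor (Qpi ∘ (ke ∘ n))).
  { assert (Z0 : zero_mor (dk ∘ (l ∘ n))) by apply zero_mor_postcomp, (proj1 Hn).
    rewrite comp_assoc, l_spec, <- comp_assoc in Z0. exact Z0. }
  assert (Mken := mono_comp (kernel_mono (kerM_kernel e)) (kernel_mono Hn)).
  destruct (image_cover (cokerM_cokernel H) Mken Z1) as [P0 [u [r [Hr E1]]]].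
  (* [s] splits [i1]: on maps killing [d], precomposing with [H] is precomposing with [c ∘ s]. *)
  destruct (zero_mor_exists L U) as [z Hz].
  destruct (HS (idm U) z) as [s [[Hs1 Hs2] _]].
  assert (EH : forall W (x : Hom X W), zero_mor (x ∘ d) -> x ∘ H = x ∘ c ∘ s).
  { intros W x Zx. apply (coproduct_ext HS).
    - rewrite <- !comp_assoc, HH1, Hs1, comp_idr. auto.
    - apply zero_mor_unique.
      + rewrite <- comp_assoc, HH2. auto.
      + rewrite <- comp_assoc, Hs2. apply zero_mor_postcomp; auto. }
  assert (Zu : zero_mor (e ∘ c ∘ (s ∘ u))).
  { rewrite comp_assoc, <- (EH _ e Zed), <- comp_assoc, <- E1, !comp_assoc.
    apply zero_mor_precomp, zero_mor_precomp, (proj1 (kerM_kernel e)). }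
  assert (Zdp : zero_mor (cokerM d ∘ p)).
  { destruct Hpd as [a Ha]. rewrite Ha, comp_assoc.
    apply zero_mor_precomp, (proj1 (cokerM_cokernel d)). }
  assert (Z3 : zero_mor (cokerM d ∘ (ke ∘ n))).
  { apply (zero_mor_epi_cancel Hr).
    rewrite <- comp_assoc, E1, comp_assoc, (EH _ _ (proj1 (cokerM_cokernel d))), <- !comp_assoc.
    exact (Hdonor Zu Zdp). }
  destruct (image_cover (cokerM_cokernel d) Mken Z3) as [P1 [u' [r' [Hr' E3]]]].
  assert (E4 : n ∘ r' = d' ∘ u').
  { apply (kernel_mono (kerM_kernel e)). rewrite !comp_assoc, E3, d'_spec. auto. }
  apply (zero_mor_epi_cancel Hr'). rewrite <- comp_assoc, E4, comp_assoc.
  apply zero_mor_precomp, (proj1 (cokerM_cokernel d')).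
Qed.

Lemma homology_to_donor_epi : epi chi.
Proof.
  apply (epi_of_comp (g := cokerM d')). rewrite chi_spec.
  apply (lift_epi (kerM_kernel qbar) l_spec). intros W t Zt.
  destruct (pullback_epi (cokernel_epi (cokerM_cokernel H)) (kernel_mono (kerM_kernel qbar)))
    as [P0 [k [r [Hr E1]]]].
  assert (Zqk : zero_mor (q ∘ k)).
  { rewrite <- qbar_spec, <- comp_assoc, E1, comp_assoc.
    apply zero_mor_precomp, (proj1 (kerM_kernel qbar)). }
  assert (Hkq := kerM_kernel q). set (kq := kerM q) in *.
  assert (Ha := lift_spec Hkq Zqk).
  assert (Hm := lift_spec Hkq Zqc).
  assert (Hj := lift_spec Hkq q_ke_zero).
  assert (Hkj : is_kernel (e ∘ kq) (lift kq ke)).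
  { apply (kernel_restrict (g1 := e) (h := q) (kerM_kernel e)); auto.
    exact (proj1 (kerM_kernel e)). }
  assert (Zs : zero_mor (t ∘ Qpi ∘ kq)).
  { apply (Hreceptor (proj1 Hkq) Hkj Hm).
    - rewrite <- comp_assoc, Hj, <- comp_assoc. exact Zt.
    - rewrite <- comp_assoc, Hm, <- HH1, !comp_assoc. apply zero_mor_precomp.
      rewrite <- comp_assoc. apply zero_mor_postcomp, (proj1 (cokerM_cokernel H)). }
  apply (zero_mor_epi_cancel Hr). rewrite <- comp_assoc, <- E1, <- Ha, !comp_assoc.
  apply zero_mor_precomp; auto.
Qed.

Lemma homology_to_donor_iso : is_iso chi.
Proof. exact (mono_epi_iso homology_to_donor_mono homology_to_donor_epi). Qed.

End HomologyToDonor.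

Section DoubleComplexGeometry.
Context {C : AbelianCategory} (A : DoubleComplex C).

Lemma eout_din_zero i r : zero_mor (eout A i r ∘ din A i r).
Proof.
  unfold eout, din. generalize (Z.succ_pred r). generalize (Z.pred r). intros s E. destruct E.
  exact (d2d2 A i s).
Qed.

Lemma fout_cin_zero i r : zero_mor (fout A i r ∘ cin A i r).
Proof.
  unfold fout, cin. generalize (Z.succ_pred i). generalize (Z.pred i). intros s E. destruct E.
  exact (d1d1 A s r).
Qed.

Lemma cin_cin_zero i r : zero_mor (cin A i r ∘ cin A (Z.pred i) r).
Proof.
  unfold cin. generalize (Z.succ_pred i) (Z.succ_pred (Z.pred i)).
  generalize (Z.pred (Z.pred i)). generalize (Z.pred i). intros s t E1 E2. destruct E2, E1.
  exact (d1d1 A t r).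
Qed.

Lemma din_din_zero i r : zero_mor (din A i r ∘ din A i (Z.pred r)).
Proof.
  unfold din. generalize (Z.succ_pred r) (Z.succ_pred (Z.pred r)).
  generalize (Z.pred (Z.pred r)). generalize (Z.pred r). intros s t E1 E2. destruct E2, E1.
  exact (d2d2 A i t).
Qed.

Lemma pin_cin i r : pin A i r = cin A i r ∘ din A (Z.pred i) r.
Proof.
  unfold pin, cin, din. generalize (Z.succ_pred r) (Z.succ_pred i).
  generalize (Z.pred r). generalize (Z.pred i). intros s t Er Ei. destruct Er, Ei.
  symmetry. exact (d1d2 A s t).
Qed.

Lemma qout_fout i r : qout A i r = eout A (Z.succ i) r ∘ fout A i r.
Proof. exact (d1d2 A i r). Qed.

Lemma qout_pred_row i r : exists g, qout A (Z.pred i) r = g ∘ (eout A i r ∘ cin A i r).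
Proof.
  unfold qout, eout, cin. generalize (Z.succ_pred i). generalize (Z.pred i). intros s E. destruct E.
  exists (idm _). rewrite comp_idl. exact (d1d2 A s r).
Qed.

Lemma qout_pred_col i r : exists g, qout A i (Z.pred r) = g ∘ (fout A i r ∘ din A i r).
Proof.
  unfold qout, fout, din. generalize (Z.succ_pred r). generalize (Z.pred r). intros s E. destruct E.
  exists (idm _). rewrite comp_idl. reflexivity.
Qed.

Lemma pin_succ_col i r : exists b, pin A i (Z.succ r) = eout A i r ∘ cin A i r ∘ b.
Proof.
  unfold pin, din, cin, eout.
  generalize (Z.succ_pred (Z.succ r)). generalize (Z.pred_succ r).
  generalize (Z.pred (Z.succ r)). intros t Et E1. subst t. rewrite (UIP_dec Z.eq_dec E1 eq_refl).
  exists (idm _). rewrite comp_idr. reflexivity.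
Qed.

Lemma pin_succ_row i r : exists b, pin A (Z.succ i) r = fout A i r ∘ din A i r ∘ b.
Proof.
  unfold pin, din, cin, fout.
  generalize (Z.succ_pred (Z.succ i)). generalize (Z.pred_succ i).
  generalize (Z.pred (Z.succ i)). intros t Et E1. subst t. rewrite (UIP_dec Z.eq_dec E1 eq_refl).
  exists (idm _). rewrite comp_idr. cbn.
  generalize (Z.succ_pred r). generalize (Z.pred r). intros s E. destruct E.
  symmetry. exact (d1d2 A i s).
Qed.

Lemma eout_pin_zero i r : zero_mor (eout A i r ∘ pin A i r).
Proof. unfold pin. rewrite comp_assoc. apply zero_mor_precomp, eout_din_zero. Qed.

Lemma fout_pin_zero i r : zero_mor (fout A i r ∘ pin A i r).
Proof. rewrite pin_cin, comp_assoc. apply zero_mor_precomp, fout_cin_zero. Qed.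

Lemma qout_cin_zero i r : zero_mor (qout A i r ∘ cin A i r).
Proof. rewrite qout_fout, <- comp_assoc. apply zero_mor_postcomp, fout_cin_zero. Qed.

Lemma qout_din_zero i r : zero_mor (qout A i r ∘ din A i r).
Proof. unfold qout. rewrite <- comp_assoc. apply zero_mor_postcomp, eout_din_zero. Qed.

End DoubleComplexGeometry.

Section IntramuralIsomorphisms.
Context {C : AbelianCategory} (A : DoubleComplex C).

Lemma donor_above_zero i r :
  is_zero_obj (donor_at A (Z.pred i) r) ->
  maps_kernel_into_image (cin A i r) (eout A i r) (pin A i r).
Proof.
  intros HU.
  apply (donor_zero_maps_kernel_into_image (qout_cin_zero _ _ _) (qout_din_zero _ _ _) HU).
  - apply subimage_of_zero_mor, cin_cin_zero.
  - rewrite <- pin_cin. apply subimage_refl.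
  - apply qout_pred_row.
Qed.

Lemma donor_left_zero i r :
  is_zero_obj (donor_at A i (Z.pred r)) ->
  maps_kernel_into_image (din A i r) (fout A i r) (pin A i r).
Proof.
  intros HL.
  apply (donor_zero_maps_kernel_into_image (qout_cin_zero _ _ _) (qout_din_zero _ _ _) HL).
  - apply subimage_refl.
  - apply subimage_of_zero_mor, din_din_zero.
  - apply qout_pred_col.
Qed.

Lemma receptor_right_zero i r :
  is_zero_obj (receptor_at A i (Z.succ r)) ->
  kernel_covered (qout A i r) (eout A i r) (cin A i r).
Proof.
  intros HR. apply (receptor_zero_kernel_covered (eout_pin_zero _ _ _) (fout_pin_zero _ _ _) HR).
  - intros T y _. apply zero_mor_precomp, (d2d2 A i r).
  - intros T y Zy. exact Zy.
  - apply pin_succ_col.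
Qed.

Lemma receptor_below_zero i r :
  is_zero_obj (receptor_at A (Z.succ i) r) ->
  kernel_covered (qout A i r) (fout A i r) (din A i r).
Proof.
  intros HD. apply (receptor_zero_kernel_covered (eout_pin_zero _ _ _) (fout_pin_zero _ _ _) HD).
  - intros T y Zy. rewrite <- qout_fout. exact Zy.
  - intros T y _. apply zero_mor_precomp, (d1d1 A i r).
  - apply pin_succ_row.
Qed.

Lemma rec_to_Hv_at_iso i r :
  maps_kernel_into_image (cin A i r) (eout A i r) (pin A i r) ->
  kernel_covered (qout A i r) (eout A i r) (cin A i r) ->
  is_iso (rec_to_Hv_at A i r).
Proof.
  intros Hdon Hrec. destruct (pairing_spec (eout A i r) (fout A i r)) as [G1 G2].
  apply (receptor_to_homology_iso (q := qout A i r) pr_product G1 G2 (eout_pin_zero _ _ _)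
           (fout_cin_zero _ _ _)); auto.
  - exists (din A (Z.pred i) r). apply pin_cin.
  - exists (eout A (Z.succ i) r). apply qout_fout.
Qed.

Lemma rec_to_Hh_at_iso i r :
  maps_kernel_into_image (din A i r) (fout A i r) (pin A i r) ->
  kernel_covered (qout A i r) (fout A i r) (din A i r) ->
  is_iso (rec_to_Hh_at A i r).
Proof.
  intros Hdon Hrec. destruct (pairing_spec (eout A i r) (fout A i r)) as [G1 G2].
  apply (receptor_to_homology_iso (q := qout A i r) (product_swap pr_product) G2 G1
           (fout_pin_zero _ _ _) (eout_din_zero _ _ _)); auto.
  - exists (cin A i (Z.pred r)). reflexivity.
  - exists (fout A i (Z.succ r)). reflexivity.
Qed.

Lemma Hh_to_don_at_iso i r :
  maps_kernel_into_image (cin A i r) (eout A i r) (pin A i r) ->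
  kernel_covered (qout A i r) (eout A i r) (cin A i r) ->
  is_iso (Hh_to_don_at A i r).
Proof.
  intros Hdon Hrec. destruct (copairing_spec (cin A i r) (din A i r)) as [H1 H2].
  apply (homology_to_donor_iso (p := pin A i r) in_coproduct H1 H2 (eout_din_zero _ _ _)
           (qout_cin_zero _ _ _)); auto.
  - exists (cin A i (Z.pred r)). reflexivity.
  - exists (fout A i (Z.succ r)). reflexivity.
Qed.

Lemma Hv_to_don_at_iso i r :
  maps_kernel_into_image (din A i r) (fout A i r) (pin A i r) ->
  kernel_covered (qout A i r) (fout A i r) (din A i r) ->
  is_iso (Hv_to_don_at A i r).
Proof.
  intros Hdon Hrec. destruct (copairing_spec (cin A i r) (din A i r)) as [H1 H2].
  apply (homology_to_donor_iso (p := pin A i r) (coproduct_swap in_coproduct) H2 H1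
           (fout_cin_zero _ _ _) (qout_din_zero _ _ _)); auto.
  - exists (din A (Z.pred i) r). apply pin_cin.
  - exists (eout A (Z.succ i) r). apply qout_fout.
Qed.

End IntramuralIsomorphisms.

Theorem corollary3p1 (C : AbelianCategory) (A : DoubleComplex C) (i r : Z) :
  (is_zero_obj (donor_at A (Z.pred i) r) ->
   is_zero_obj (receptor_at A i (Z.succ r)) ->
   is_iso (rec_to_Hv_at A i r) /\ is_iso (Hh_to_don_at A i r)) /\
  (is_zero_obj (donor_at A i (Z.pred r)) ->
   is_zero_obj (receptor_at A (Z.succ i) r) ->
   is_iso (rec_to_Hh_at A i r) /\ is_iso (Hv_to_don_at A i r)).
Proof.
  split; intros Hdon Hrec.
  - apply donor_above_zero in Hdon. apply receptor_right_zero in Hrec.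
    split; [apply rec_to_Hv_at_iso | apply Hh_to_don_at_iso]; assumption.
  - apply donor_left_zero in Hdon. apply receptor_below_zero in Hrec.
    split; [apply rec_to_Hh_at_iso | apply Hv_to_don_at_iso]; assumption.
Qed.
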